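(* Let $p$ be an odd prime and let $W_p=C_2\wr C_p$. Then $\mathrm{diam}_{\max}(W_p)\le 20(p-1)$.
   Context: The wreath product $W_p=C_2\wr C_p$ is the semidirect product $U\rtimes C_p$, where $U=\mathbb{F}_2^{\,p}$ and a generator of the cyclic group $C_p$ of order $p$ acts on $U$ by cyclically permuting coordinates; thus $|W_p|=p\,2^p$. For a finite group $G$ and a generating set $X$, the Cayley graph $\mathrm{Cay}(G,X)$ has vertex set $G$, with $g$ adjacent to $gx^{\pm1}$ for $x\in X$; $\mathrm{diam}(G,X)$ is its diameter, i.e. the smallest $k$ such that every element of $G$ is a product of at most $k$ elements of $X\cup X^{-1}$. The worst diameter is $\mathrm{diam}_{\max}(G)=\max\{\mathrm{diam}(G,X): X\subseteq G,\ \langle X\rangle=G\}$. *)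

From HB Require Import structures.
From mathcomp Require Import all_boot all_order all_algebra all_fingroup.

Set Implicit Arguments.
Unset Strict Implicit.
Unset Printing Implicit Defensive.

Import GRing.Theory.

(* Elements are pairs (u, a) with u : 'Z_p -> bool (a vector of F_2^p,       *)
(* coordinates indexed by Z/pZ, addition = xor) and a : 'Z_p (the cyclic     *)
(* group C_p, written additively).  The generator 1 of C_p acts on U by     *)
(* cyclically permuting coordinates: (a . v)(i) = v (i - a).                 *)
(* ('Z_p is Z/pZ for p >= 2; the theorem only uses odd primes p.)           *)

Definition wreath (p : nat) := ({ffun 'Z_p -> bool} * 'Z_p)%type.

HB.instance Definition _ p := Finite.on (wreath p).

Section WreathGroup.
Variable p : nat.
Local Notation W := (wreath p).

Definition wshift (a : 'Z_p) (v : {ffun 'Z_p -> bool}) : {ffun 'Z_p -> bool} :=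
  [ffun i => v (i - a)%R].

Definition wxor (u v : {ffun 'Z_p -> bool}) : {ffun 'Z_p -> bool} :=
  [ffun i => addb (u i) (v i)].

Definition wmul (x y : W) : W :=
  (wxor x.1 (wshift x.2 y.1), (x.2 + y.2)%R).
Definition wone : W := ([ffun => false], 0%R).
Definition winv (x : W) : W := (wshift (- x.2)%R x.1, (- x.2)%R).

Lemma wmulA : associative wmul.
Proof.
move=> [u a] [v b] [w c]; rewrite /wmul /=; congr (_, _); last by rewrite addrA.
apply/ffunP=> i; rewrite !ffunE addbA; congr (addb (addb _ _) _).
by rewrite opprD addrA.
Qed.

Lemma wmul1 : left_id wone wmul.
Proof.
move=> [u a]; rewrite /wmul /=; congr (_, _); last by rewrite add0r.
by apply/ffunP=> i; rewrite !ffunE subr0.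
Qed.

Lemma wmulV : left_inverse wone winv wmul.
Proof.
move=> [u a]; rewrite /wmul /winv /=; congr (_, _); last by rewrite addNr.
by apply/ffunP=> i; rewrite !ffunE opprK addbb.
Qed.

HB.instance Definition _ := Finite_isGroup.Build W wmulA wmul1 wmulV.

End WreathGroup.

Section Diameter.
Variable gT : finGroupType.
Local Open Scope group_scope.

Fixpoint cayley_ball (X : {set gT}) (k : nat) : {set gT} :=
  if k is k'.+1 then cayley_ball X k' :|: (cayley_ball X k' * (X :|: X^-1))
  else [set 1].

(* diam(G, X): the least k such that every element of G = gT is a product of
   at most k elements of X ∪ X^-1.  For generating X this k is < #|gT|.+1,
   so searching in [0, #|gT|] is exhaustive. *)
Definition cayley_diam (X : {set gT}) : nat :=
  find (fun k => cayley_ball X k == [set: gT]) (iota 0 #|gT|.+1).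

Definition diam_max : nat :=
  \max_(X : {set gT} | <<X>> == [set: gT]) cayley_diam X.

End Diameter.

From mathcomp Require Import all_boot all_order all_algebra all_fingroup.
From mathcomp Require Import commutator zify.

(* Fix x in X outside the base group U = F_2^p, and let N be generated by the
   x-conjugates of the commutators [x, y], y in X.  As x^p lies in the abelian
   group U, N is normal; and [x, u] together with u(0) determines u in U, so
   |W : N| <= 2p and the ball of radius 2p - 1 meets every coset of N.  N is
   reached Horner-style inside the elementary abelian group U: adjoin the
   commutators [x, y] (of length 4) one at a time, each one not yet present
   doubling the subgroup built so far, then conjugate everything by x
   (cost 2), and repeat p times.  This puts N in the ball of radius 2(p - 1) + 4 log_2 |U| = 6p - 2,
   whence diam(W, X) <= 8p - 3 <= 20(p - 1). *)

Set Implicit Arguments.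
Unset Strict Implicit.
Unset Printing Implicit Defensive.

Import GRing.Theory.

Local Open Scope group_scope.

Section CayleyBall.

Variables (gT : finGroupType) (X : {set gT}).
Local Notation ball := (cayley_ball X).

Lemma cayley_ballS n : ball n \subset ball n.+1.
Proof. exact: subsetUl. Qed.

Lemma cayley_ball_mono m n : m <= n -> ball m \subset ball n.
Proof.
move=> /subnK <-; elim: (n - m) => [|k IHk]; first by rewrite add0n.
exact: subset_trans IHk (cayley_ballS _).
Qed.

Lemma cayley_ball0 : ball 0 = 1.
Proof. by []. Qed.

Lemma group1_cayley_ball n : 1 \in ball n.
Proof. exact: subsetP (cayley_ball_mono (leq0n n)) 1 (set11 1). Qed.

Lemma cayley_ballM m n a b : a \in ball m -> b \in ball n -> a * b \in ball (m + n).
Proof.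
move=> am; elim: n b => [|n IHn] b /=; first by move/set1P->; rewrite mulg1 addn0.
rewrite addnS inE => /orP[bn | /mulsgP[c s cn Ss ->]].
  exact: subsetP (cayley_ballS _) _ (IHn b bn).
by rewrite mulgA inE mem_mulg ?orbT ?IHn.
Qed.

Lemma mem_cayley_ball1 x : x \in X -> x \in ball 1.
Proof. by move=> Xx; rewrite /= -[x]mul1g inE mem_mulg ?set11 ?inE ?Xx ?orbT. Qed.

Lemma memV_cayley_ball1 x : x \in X -> x^-1 \in ball 1.
Proof.
by move=> Xx; rewrite /= -[x^-1]mul1g inE mem_mulg ?set11 ?inE ?invgK ?Xx ?orbT.
Qed.

Lemma conj_cayley_ball n x y : x \in X -> y \in ball n -> y ^ x \in ball (n.+2).
Proof.
move=> Xx yn; have -> : n.+2 = 1 + n + 1 by rewrite add1n addn1.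
rewrite conjgE mulgA; apply: cayley_ballM _ (mem_cayley_ball1 Xx).
exact: cayley_ballM (memV_cayley_ball1 Xx) yn.
Qed.

Lemma commg_cayley_ball x y : x \in X -> y \in X -> [~ x, y] \in ball 4.
Proof.
move=> Xx Xy; rewrite commgEl -[4]/(1 + 3).
exact: cayley_ballM (memV_cayley_ball1 Xx) (conj_cayley_ball Xy (mem_cayley_ball1 Xx)).
Qed.

Lemma gen_subset_mulr_closed (A : {set gT}) :
  1 \in A -> A * X \subset A -> <<X>> \subset A.
Proof.
move=> A1 AX_A; apply/subsetP=> _ /gen_prodgP[n [c Xc ->]].
elim: n c Xc => [|n IHn] c Xc; first by rewrite big_ord0.
rewrite big_ord_recr /=; apply: subsetP AX_A _ _; rewrite mem_mulg //.
exact: IHn.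
Qed.

Lemma cayley_diam_le n : ball n = [set: gT] -> cayley_diam X <= n.
Proof.
move=> ballT; rewrite /cayley_diam; have [n_small | ] := ltnP n #|gT|.+1.
  rewrite leqNgt; apply/negP=> /(before_find 0).
  by rewrite nth_iota // add0n ballT eqxx.
by apply: leq_trans; rewrite -[X in _ <= X](size_iota 0) find_size.
Qed.

End CayleyBall.

Lemma card_mulg_proper (gT : finGroupType) (A B : {set gT}) (N : {group gT}) :
  A * N \proper B * N -> #|A * N| + #|N| <= #|B * N|.
Proof.
case/properP=> sAB [d BNd ANd].
have BN_N : B * N * N = B * N by rewrite -mulgA mulGid.
have sdN : d *: N \subset B * N.
  by rewrite -BN_N mulSg // sub1set.
have disj : [disjoint A * N & d *: N].
  apply/pred0P=> y /=; apply/negbTE/andP=> [[ANy /lcosetP[m Nm dm]]].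
  by case/negP: ANd; rewrite -(mulgK m d) -dm -(mulGid N) mulgA mem_mulg ?groupV //.
rewrite -(card_lcoset N d) -cardsUI (disjoint_setI0 disj) cards0 addn0.
by apply: subset_leq_card; rewrite subUset sAB sdN.
Qed.

Section NormalCayleyBall.

Variables (gT : finGroupType) (X : {set gT}) (N : {group gT}).
Hypotheses (nNX : X \subset 'N(N)) (genX : <<X>> = [set: gT]).
Local Notation ball := (cayley_ball X).

Lemma cayley_ball_mulg_stable k :
  ball k.+1 * N \subset ball k * N -> ball k * N = [set: gT].
Proof.
move=> stable; apply/eqP; rewrite eqEsubset subsetT -genX.
apply: gen_subset_mulr_closed; first by rewrite -[1]mulg1 mem_mulg ?group1_cayley_ball.
apply/subsetP=> _ /mulsgP[_ y /mulsgP[b m bk Nm ->] Xy ->].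
have -> : b * m * y = b * y * m ^ y by rewrite conjgE !mulgA mulgK.
apply: subsetP stable _ _; rewrite mem_mulg ?memJ_norm ?(subsetP nNX) //.
by rewrite -addn1 (cayley_ballM bk (mem_cayley_ball1 Xy)).
Qed.

Lemma cayley_ball_mulg_card k :
  ball k * N = [set: gT] \/ k.+1 * #|N| <= #|ball k * N|.
Proof.
elim: k => [|k IHk]; first by right; rewrite mul1n cayley_ball0 mul1g.
have grow : ball k * N \subset ball k.+1 * N by rewrite mulSg ?cayley_ballS.
have [stable | not_stable] := boolP (ball k.+1 * N \subset ball k * N).
  left; apply/eqP; rewrite eqEsubset subsetT.
  by rewrite -(cayley_ball_mulg_stable stable).
case: IHk => [full | IHk].
  by case/negP: not_stable; rewrite full subsetT.
right; rewrite mulSn addnC.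
apply: leq_trans _ (card_mulg_proper (A := ball k) _); first by rewrite leq_add2r.
by rewrite properE grow.
Qed.

Lemma cayley_ball_mulg_setT k : #|gT| <= k.+1 * #|N| -> ball k * N = [set: gT].
Proof.
move=> le_gT_kN; have [// | le_kN] := cayley_ball_mulg_card k.
by apply/eqP; rewrite eqEcard subsetT cardsT (leq_trans le_gT_kN).
Qed.

End NormalCayleyBall.

Lemma proper_card_double (gT : finGroupType) (H K : {group gT}) :
  H \proper K -> 2 * #|H| <= #|K|.
Proof.
rewrite properE => /andP[sHK not_sKH].
by rewrite -(Lagrange sHK) mulnC leq_mul2l indexg_gt1 not_sKH orbT.
Qed.

Lemma cayley_ball_join_involution (gT : finGroupType) (X : {set gT})
    (H : {group gT}) c m n :
  H \subset cayley_ball X m -> c \in cayley_ball X n -> c ^+ 2 = 1 ->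
  c \in 'N(H) -> H <*> <[c]> \subset cayley_ball X (m + n).
Proof.
move=> Hm cn c2 nHc; rewrite norm_joinEr ?cycle_subG //.
apply/subsetP=> _ /mulsgP[h _ Hh /cycleP[i ->] ->].
rewrite -(expg_mod i c2); have : i %% 2 < 2 by rewrite ltn_mod.
case: (i %% 2) => [|[|//]] _; last by rewrite expg1 (cayley_ballM (subsetP Hm h Hh) cn).
rewrite mulg1; exact: subsetP (cayley_ball_mono X (leq_addr n m)) _ (subsetP Hm h Hh).
Qed.

Section LogBallCover.

Variables (gT : finGroupType) (X : {set gT}) (A : {group gT}) (S : {set gT}).
Variables (x : gT) (d : nat).
Hypotheses (cAA : abelian A) (A_sqr : {in A, forall a, a ^+ 2 = 1}).
Hypotheses (sSA : S \subset A) (S_ball : S \subset cayley_ball X d).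
Hypotheses (Xx : x \in X) (nAx : x \in 'N(A)).

Local Notation log_covered b H :=
  (H \subset cayley_ball X (b + d * trunc_log 2 #|H|)).

Lemma log_covered_join1 b (H : {group gT}) c :
  c \in S -> H \subset A -> log_covered b H ->
  exists K : {group gT}, [/\ H \subset K, c \in K, K \subset A & log_covered b K].
Proof.
move=> Sc sHA Hb; have [Hc | notHc] := boolP (c \in H); first by exists H.
have Ac := subsetP sSA c Sc.
have Kc : c \in H <*> <[c]> := subsetP (joing_subr H <[c]>) c (cycle_id c).
have nHc : c \in 'N(H).
  exact: subsetP (cent_sub H) c (subsetP (centsS sHA cAA) c Ac).
exists (H <*> <[c]>)%G; split=> //; first exact: joing_subl.
  by rewrite join_subG sHA cycle_subG.
apply: subset_trans (cayley_ball_join_involution Hb (subsetP S_ball c Sc) (A_sqr Ac) nHc)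
  (cayley_ball_mono _ _).
rewrite -addnA -mulnSr leq_add2l leq_mul2l; apply/orP; right.
rewrite -trunc_log2_double ?cardG_gt0 // leq_trunc_log // -mul2n proper_card_double //.
by rewrite properE joing_subl; apply: contra notHc => /subsetP; apply.
Qed.

Lemma log_covered_join b (s : seq gT) (H : {group gT}) :
  {subset s <= S} -> H \subset A -> log_covered b H ->
  exists K : {group gT},
    [/\ H \subset K, {subset s <= K}, K \subset A & log_covered b K].
Proof.
elim: s H => [|c s IHs] H sS sHA Hb; first by exists H.
have [H1 [sHH1 H1c sH1A H1b]] := log_covered_join1 (sS c (mem_head c s)) sHA Hb.
have sS' : {subset s <= S} by move=> y sy; apply: sS; rewrite inE sy orbT.
have [K [sH1K sK sKA Kb]] := IHs H1 sS' sH1A H1b.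
exists K; split=> //; first exact: subset_trans sHH1 sH1K.
by move=> y; rewrite inE => /predU1P[-> | /sK //]; apply: subsetP sH1K c H1c.
Qed.

Lemma log_covered_conj b (H : {group gT}) :
  log_covered b H -> log_covered b.+2 (H :^ x).
Proof.
move=> Hb; apply/subsetP=> _ /imsetP[y Hy ->]; rewrite cardJg !addSn.
exact: conj_cayley_ball Xx (subsetP Hb y Hy).
Qed.

Lemma log_covered_conjugates k :
  exists K : {group gT}, [/\ K \subset A, log_covered (2 * k) K &
    forall c j, c \in S -> j <= k -> c ^ (x ^+ j) \in K].
Proof.
have sS : {subset enum S <= S} by move=> c; rewrite mem_enum.
elim: k => [|k [H [sHA Hb HS]]].
  have one_b : log_covered 0 [1 gT]%G.
    by rewrite cards1 trunc_log1 sub1set group1_cayley_ball.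
  have [K [_ SK sKA Kb]] := log_covered_join sS (sub1G A) one_b.
  exists K; split=> // c j Sc; rewrite leqn0 => /eqP->.
  by rewrite conjg1 SK ?mem_enum.
have sHxA : H :^ x \subset A by rewrite -(normP nAx) conjSg.
have [K [sHxK SK sKA Kb]] := log_covered_join sS sHxA (log_covered_conj Hb).
exists K; rewrite mulnS; split=> // c [|j] Sc le_jk; first by rewrite conjg1 SK ?mem_enum.
by rewrite expgSr conjgM (subsetP sHxK) // memJ_conjg HS.
Qed.

Lemma conjugates_in_cayley_ball k e : #|A| <= 2 ^ e ->
  exists2 K : {group gT}, K \subset cayley_ball X (2 * k + d * e) &
    forall c j, c \in S -> j <= k -> c ^ (x ^+ j) \in K.
Proof.
move=> le_A_2e; have [K [sKA Kb KS]] := log_covered_conjugates k.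
exists K => //; apply: subset_trans Kb (cayley_ball_mono _ _).
rewrite leq_add2l leq_mul2l -[X in _ <= X](trunc_expnK e (ltnSn 1)).
by rewrite leq_trunc_log ?orbT // (leq_trans (subset_leq_card sKA)).
Qed.

End LogBallCover.

Lemma Zp_prime_mulrn_onto p (a b : 'Z_p) :
  prime p -> a != 0%R -> exists n, b = (a *+ n)%R.
Proof.
move=> p_pr nz_a; have p_gt1 := prime_gt1 p_pr.
have a_unit : a \is a GRing.unit.
  have a_lt_p : (a < p)%N by rewrite -[X in (_ < X)%N](Zp_cast p_gt1) ltn_ord.
  by rewrite -[a]natr_Zp unitZpE // prime_coprime // gtnNdvd // lt0n.
by exists (a^-1 * b)%R; rewrite -mulr_natr natr_Zp mulVKr.
Qed.

Section WreathBase.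

Variable p : nat.
Local Notation W := (wreath p).

Lemma wtopM (g h : W) : (g * h).2 = (g.2 + h.2)%R. Proof. by []. Qed.
Lemma wtopV (g : W) : (g^-1).2 = (- g.2)%R. Proof. by []. Qed.
Lemma wtopX (g : W) n : (g ^+ n).2 = (g.2 *+ n)%R.
Proof. by elim: n => [|n IHn] //; rewrite expgS wtopM IHn mulrS. Qed.

Definition wbase : {set W} := [set g : W | g.2 == 0%R].

Lemma wbase_group_set : group_set wbase.
Proof.
apply/group_setP; split=> [|g h]; first by rewrite inE.
by rewrite !inE wtopM => /eqP-> /eqP->; rewrite addr0.
Qed.
Canonical wbase_group := Group wbase_group_set.

Lemma wbase_abelian : abelian wbase.
Proof.
apply/centsP=> g; rewrite inE => /eqP g2 h; rewrite inE => /eqP h2.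
congr (_, _); last by rewrite /= g2 h2.
by apply/ffunP=> i; rewrite /= !ffunE g2 h2 !subr0 addbC.
Qed.

Lemma wbase_sqr : {in wbase, forall u, u ^+ 2 = 1}.
Proof.
move=> u; rewrite inE => /eqP u2; congr (_, _); last by rewrite /= u2 addr0.
by apply/ffunP=> i; rewrite /= !ffunE u2 subr0 addbb.
Qed.

Lemma norm_wbase g : g \in 'N(wbase).
Proof.
rewrite inE; apply/subsetP=> _ /imsetP[u + ->]; rewrite !inE => /eqP u2.
by rewrite conjgE !wtopM wtopV u2 add0r addNr.
Qed.

Lemma commg_wbase g h : [~ g, h] \in wbase.
Proof. by rewrite inE commgEl conjgE !wtopM !wtopV (addrC g.2) addKr addNr. Qed.

Lemma expg_p_wbase g : 1 < p -> g ^+ p \in wbase.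
Proof. by move=> p_gt1; rewrite inE wtopX -mulr_natr -Zp_nat_mod // modnn mulr0. Qed.

Lemma card_wbase : 1 < p -> #|wbase| <= 2 ^ p.
Proof.
move=> p_gt1; have -> : (2 ^ p)%N = #|{ffun 'Z_p -> bool}|.
  by rewrite card_ffun card_bool card_ord Zp_cast.
apply: (@leq_card_in _ _ (fun u : W => u.1)) => u v.
rewrite !inE => /eqP u2 /eqP v2 eq_uv.
by case: u v u2 v2 eq_uv => [f a] [g b] /= -> -> ->.
Qed.

End WreathBase.

Section WreathCommutators.

Variables (p : nat) (x : wreath p).
Hypotheses (p_pr : prime p) (x_top : x.2 != 0%R).
Local Notation W := (wreath p).

Lemma wbase_coset (g : W) : exists n, g * (x ^+ n)^-1 \in wbase p.
Proof.
have [n top_g] := Zp_prime_mulrn_onto g.2 p_pr x_top.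
by exists n; rewrite inE wtopM wtopV wtopX -top_g subrr.
Qed.

Lemma wbase_cent_const (z : W) i :
  z \in wbase p -> commute x z -> z.1 i = z.1 0%R.
Proof.
rewrite inE => /eqP z2 cxz.
have shift_z j : z.1 (j - x.2)%R = z.1 j.
  have := congr1 (fun g : W => g.1 j) cxz; rewrite /= !ffunE z2 subr0.
  by case: (x.1 j); case: (z.1 j); case: (z.1 _).
have shiftn_z n j : z.1 (j - x.2 *+ n)%R = z.1 j.
  elim: n j => [|n IHn] j; first by rewrite subr0.
  by rewrite mulrS opprD addrA IHn shift_z.
have [n ->] := Zp_prime_mulrn_onto i p_pr x_top.
by rewrite -(shiftn_z n) subrr.
Qed.

Lemma commg_wbase_inj (u v : W) : u \in wbase p -> v \in wbase p ->
  u.1 0%R = v.1 0%R -> [~ x, u] = [~ x, v] -> u = v.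
Proof.
move=> Bu Bv uv0 /mulgI xuv.
have cxz : commute x (u * v^-1) by apply/commgP/conjg_fixP; rewrite conjgM xuv conjgK.
have Bz : u * v^-1 \in wbase p by rewrite groupM ?groupV.
move: Bu Bv; rewrite !inE => /eqP u2 /eqP v2.
apply: injective_projections; last by rewrite u2 v2.
apply/ffunP=> i; have := wbase_cent_const i Bz cxz.
rewrite /= !ffunE u2 v2 oppr0 !subr0 !addr0 uv0 addbb.
by case: (u.1 i); case: (v.1 i).
Qed.

Lemma card_wreath_commg (N : {set W}) :
  (forall g, [~ x, g] \in N) -> #|[set: W]| <= 2 * p * #|N|.
Proof.
move=> xN; have p_gt1 := prime_gt1 p_pr.
pose psi (g : W) := ([~ x, (g.1, 0%R) : W], g.1 0%R, g.2).
have psi_inj : injective psi.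
  move=> g h eq_psi; have xgh := congr1 (fun t => t.1.1) eq_psi.
  have gh0 := congr1 (fun t => t.1.2) eq_psi; have gh2 := congr1 snd eq_psi.
  have Bg : (g.1, 0%R) \in wbase p by rewrite inE.
  have Bh : (h.1, 0%R) \in wbase p by rewrite inE.
  by apply: injective_projections => //; case: (commg_wbase_inj Bg Bh gh0 xgh).
have psi_N : psi @: [set: W] \subset setX (setX N [set: bool]) [set: 'Z_p].
  by apply/subsetP=> _ /imsetP[g _ ->]; rewrite !inE /= xN.
rewrite -(card_imset _ psi_inj); apply: leq_trans (subset_leq_card psi_N) _.
by rewrite !cardsX !cardsT card_bool card_ord Zp_cast // [X in _ <= X]mulnC mulnA.
Qed.

End WreathCommutators.

Section WreathGenerators.

Variables (p : nat) (X : {set wreath p}) (x : wreath p).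
Hypotheses (p_pr : prime p) (genX : <<X>> = [set: wreath p]).
Hypotheses (Xx : x \in X) (x_top : x.2 != 0%R).
Local Notation W := (wreath p).
Local Notation S := [set [~ x, y] | y in X].
Local Notation N := <<[set c ^ (x ^+ j) | c : W in S, j : 'I_p]>>.

Lemma xcomm_sub_wbase : N \subset wbase p.
Proof.
rewrite gen_subG; apply/subsetP=> _ /imset2P[_ j /imsetP[y _ ->] _ ->].
by rewrite memJ_norm ?norm_wbase ?commg_wbase.
Qed.

Lemma norm_xcomm_x : x \in 'N(N).
Proof.
rewrite inE -genJ genS //; apply/subsetP=> _ /imsetP[_ /imset2P[c j Sc _ ->] ->].
rewrite -conjgM -expgSr; have [lt_j1p | ] := ltnP j.+1 p.
  by apply/imset2P; exists c (Ordinal lt_j1p).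
move=> le_p_j1; have -> : j.+1 = p by apply/eqP; rewrite eqn_leq ltn_ord.
apply/imset2P; exists c (Ordinal (prime_gt0 p_pr)) => //=.
rewrite expg0 conjg1; apply/conjg_fixP/commgP/esym/(centsP (wbase_abelian p)).
  exact: expg_p_wbase x (prime_gt1 p_pr).
by case/imsetP: Sc => y _ ->; apply: commg_wbase.
Qed.

Lemma norm_xcomm g : g \in 'N(N).
Proof.
have [n Bgxn] := wbase_coset p_pr x_top g.
rewrite -(mulgKV (x ^+ n) g) groupM ?groupX ?norm_xcomm_x //.
exact: subsetP (cent_sub N) _ (subsetP (centsS xcomm_sub_wbase (wbase_abelian p)) _ Bgxn).
Qed.

Lemma commg_xcomm g : [~ x, g] \in N.
Proof.
have xcomm_group : group_set [set g | [~ x, g] \in N].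
  apply/group_setP; split=> [|g1 g2]; first by rewrite inE commg1 group1.
  by rewrite !inE commgMJ => xg1 xg2; rewrite groupM ?memJ_norm ?norm_xcomm.
suff : <<X>> \subset Group xcomm_group.
  by rewrite genX => /subsetP/(_ g (in_setT g)); rewrite inE.
rewrite gen_subG; apply/subsetP=> y Xy; rewrite inE mem_gen //.
by apply/imset2P; exists [~ x, y] (Ordinal (prime_gt0 p_pr)); rewrite ?imset_f //= conjg1.
Qed.

Lemma xcomm_in_cayley_ball : N \subset cayley_ball X (2 * p.-1 + 4 * p).
Proof.
have S_ball : S \subset cayley_ball X 4.
  by apply/subsetP=> _ /imsetP[y Xy ->]; apply: commg_cayley_ball.
have S_wbase : S \subset wbase p.
  by apply/subsetP=> _ /imsetP[y _ ->]; apply: commg_wbase.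
have [K K_ball SK] := conjugates_in_cayley_ball (wbase_abelian p) (@wbase_sqr p)
  S_wbase S_ball Xx (norm_wbase x) p.-1 (card_wbase (prime_gt1 p_pr)).
apply: subset_trans K_ball; rewrite gen_subG.
apply/subsetP=> _ /imset2P[c j Sc _ ->]; apply: SK => //.
by rewrite -ltnS prednK ?prime_gt0.
Qed.

Lemma cayley_diam_wreath : cayley_diam X <= 8 * p - 3.
Proof.
have p_gt1 := prime_gt1 p_pr.
have full : cayley_ball X (2 * p).-1 * N = [set: W].
  apply: cayley_ball_mulg_setT genX _ _; first by apply/subsetP=> y _; apply: norm_xcomm.
  rewrite prednK ?muln_gt0 ?prime_gt0 // -cardsT.
  by have := card_wreath_commg p_pr x_top commg_xcomm.
apply: cayley_diam_le; apply/eqP; rewrite eqEsubset subsetT -full.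
apply/subsetP=> _ /mulsgP[b n bB Nn ->].
have -> : 8 * p - 3 = (2 * p).-1 + (2 * p.-1 + 4 * p) by lia.
exact: cayley_ballM bB (subsetP xcomm_in_cayley_ball n Nn).
Qed.

End WreathGenerators.

Lemma gen_wreath_top_neq0 p (X : {set wreath p}) :
  <<X>> = [set: wreath p] -> exists2 x, x \in X & x.2 != 0%R.
Proof.
move=> genX; apply/exists_inP; rewrite -negb_forall_in; apply/negP=> /forall_inP X_top.
have : <<X>> \subset wbase p by rewrite gen_subG; apply/subsetP=> y /X_top; rewrite inE.
by rewrite genX => /subsetP/(_ ([ffun => false], 1%R) (in_setT _)); rewrite inE oner_eq0.
Qed.

Theorem theorem1 (p : nat) (p_prime : prime p) (p_odd : odd p) :
  diam_max (wreath p) <= 20 * (p - 1).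
Proof.
apply/bigmax_leqP=> X /eqP genX; have [x Xx x_top] := gen_wreath_top_neq0 genX.
apply: leq_trans (cayley_diam_wreath p_prime genX Xx x_top) _.
have := prime_gt1 p_prime; lia.
Qed.
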